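(* Let $a_1,a_2$ be nonzero integers, $\Delta:=a_1^2+4a_2$ assumed not a perfect square, $\Delta_0$ the squarefree part of $\Delta$, and $K:=\mathbb{Q}(\sqrt{\Delta})$. Let $n$ be an odd positive integer with $3\nmid n$ whenever $\Delta_0=-3$, let $d$ be a positive integer dividing $n$, and let $\zeta_n=e^{2\pi i/n}$. Then for $a\in K$: $a\in K(\zeta_n)^d$ if and only if $a\in K^d$.
   Context: For a field $F$, $F^d$ denotes the set of $d$th powers of elements of $F$. *)

From mathcomp Require Import all_boot all_order all_algebra all_field.
Set Implicit Arguments. Unset Strict Implicit. Unset Printing Implicit Defensive.
Import Order.TTheory GRing.Theory Num.Theory.
Local Open Scope ring_scope.

Definition is_subfield (S : algC -> Prop) : Prop :=
  [/\ S 0, S 1, (forall x y, S x -> S y -> S (x - y)),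
      (forall x y, S x -> S y -> S (x * y)) & (forall x, S x -> S x^-1)].

Definition gen_field (G : algC -> Prop) (x : algC) : Prop :=
  forall S, is_subfield S -> (forall g, G g -> S g) -> S x.

Definition quad_field (D : int) : algC -> Prop :=
  gen_field (fun g => g = sqrtC (D%:~R)).

(* zeta_n = e^{2 pi i / n}: n.-root (-1) is e^{i pi / n} (minimal nonnegative argument). *)
Definition zeta (n : nat) : algC := (n.-root (-1)) ^+ 2.

Definition adjoin_zeta (D : int) (n : nat) : algC -> Prop :=
  gen_field (fun g => quad_field D g \/ g = zeta n).

Definition dth_powers (F : algC -> Prop) (d : nat) (a : algC) : Prop :=
  exists b, F b /\ a = b ^+ d.

Definition int_squarefree (z : int) : Prop :=
  z != 0 /\ forall p : nat, prime p -> ~~ (p * p %| `|z|)%N.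

Definition is_square_int (z : int) : Prop := exists m : int, z = m * m.

(* Write s = sqrt(Delta), K = Q(s), L = K(zeta_n), and suppose a = b^d with b in L.
   Let sigma be an automorphism of the algebraic numbers fixing s and acting on
   n-th roots of unity as w |-> w^(t+1) with t prime to d.  Then sigma(b)/b is a
   d-th root of unity which can be absorbed into b, making b sigma-fixed.  A
   sigma-fixed c in L with c^d in K lies in K: two automorphisms agreeing on s
   differ on c by a d-th root of unity xi, and xi is sigma-fixed (sigma commutes
   with them on L), so xi^t = 1 = xi^d and xi = 1.
   For the 3'-part of d take sigma = (zeta |-> zeta^2)^2, so t = 3.  For the
   3-part, one needs sigma fixing s but moving a primitive cube root of unity;
   it exists unless K = Q(sqrt(-3)), which is excluded when 3 | n.  The two
   parts are recombined by Bezout. *)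

From HB Require Import structures.
From mathcomp Require Import all_boot all_order all_algebra all_field.
From mathcomp.algebra_tactics Require Import ring.
From mathcomp.zify Require Import zify.
From Stdlib Require Import Classical_Prop.
Import Order.TTheory GRing.Theory Num.Theory.
Local Open Scope ring_scope.
Set Implicit Arguments. Unset Strict Implicit.

Section Subfield.

Variable S : algC -> Prop.
Hypothesis subS : is_subfield S.

Lemma subfield0 : S 0. Proof. by case: subS. Qed.
Lemma subfield1 : S 1. Proof. by case: subS. Qed.

Lemma subfieldB x y : S x -> S y -> S (x - y).
Proof. by case: subS => _ _ SB _ _; apply: SB. Qed.

Lemma subfieldM x y : S x -> S y -> S (x * y).
Proof. by case: subS => _ _ _ SM _; apply: SM. Qed.

Lemma subfieldV x : S x -> S x^-1.
Proof. by case: subS => _ _ _ _ SV; apply: SV. Qed.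

Lemma subfieldN x : S x -> S (- x).
Proof. by rewrite -sub0r; apply: subfieldB subfield0. Qed.

Lemma subfieldD x y : S x -> S y -> S (x + y).
Proof. by move=> Sx Sy; rewrite -[y]opprK; apply/subfieldB/subfieldN. Qed.

Lemma subfield_div x y : S x -> S y -> S (x / y).
Proof. by move=> Sx Sy; apply/subfieldM/subfieldV. Qed.

Lemma subfieldX x k : S x -> S (x ^+ k).
Proof.
by move=> Sx; elim: k => [|k IHk]; rewrite ?expr0 ?exprS; [apply: subfield1 | apply: subfieldM].
Qed.

Lemma subfield_nat k : S k%:R.
Proof.
by elim: k => [|k IHk]; rewrite ?mulrS; [apply: subfield0 | apply/subfieldD/IHk/subfield1].
Qed.

Lemma subfield_int (m : int) : S m%:~R.
Proof. by case: m => k; rewrite ?NegzE ?mulrNz; [|apply: subfieldN]; apply: subfield_nat. Qed.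

Lemma subfield_Crat x : x \in Crat -> S x.
Proof.
case/CratP => q ->; rewrite -[q]divq_num_den fmorph_div /= !rmorph_int.
by apply: subfield_div; apply: subfield_int.
Qed.

Lemma dth_powers_dvd d e a : (e %| d)%N -> dth_powers S d a -> dth_powers S e a.
Proof.
move=> /dvdnP[k ->] [b [Sb ->]].
by exists (b ^+ k); split; [apply: subfieldX | rewrite exprM].
Qed.

Lemma dth_powers_coprimeM d e a : coprime d e -> a != 0 ->
  dth_powers S d a -> dth_powers S e a -> dth_powers S (d * e) a.
Proof.
move=> co_de a0 [b [Sb ab]] [c [Sc ac]].
have [d0 | d_gt0] := posnP d; first by exists b; rewrite d0 mul0n -d0.
have [u v Bezout _] := egcdnP e d_gt0; rewrite (eqP co_de) in Bezout.
exists (c ^+ u / b ^+ v); split; first by apply/subfield_div; apply: subfieldX.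
rewrite expr_div_n -!exprM.
have -> : (u * (d * e) = e * (u * d))%N by lia.
have -> : (v * (d * e) = d * (v * e))%N by lia.
by rewrite (exprM c) (exprM b) -ab -ac Bezout exprD expr1 mulrAC divff ?mul1r ?expf_neq0.
Qed.

End Subfield.

Lemma gen_field_subfield G : is_subfield (gen_field G).
Proof.
split=> [S subS _|S subS _|x y Gx Gy S subS GS|x y Gx Gy S subS GS|x Gx S subS GS].
- exact: subfield0.
- exact: subfield1.
- by apply: subfieldB => //; [apply: Gx | apply: Gy].
- by apply: subfieldM => //; [apply: Gx | apply: Gy].
- by apply: subfieldV => //; apply: Gx.
Qed.

Lemma gen_field_gen G g : G g -> gen_field G g.
Proof. by move=> Gg S _; apply. Qed.

Lemma morph_eq_subfield (f g : {rmorphism algC -> algC}) : is_subfield (fun x => f x = g x).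
Proof.
split=> [||x y fgx fgy|x y fgx fgy|x fgx]; rewrite ?rmorph0 ?rmorph1 //.
- by rewrite !rmorphB fgx fgy.
- by rewrite !rmorphM fgx fgy.
- by rewrite !fmorphV fgx.
Qed.

Lemma preim_subfield (f : {rmorphism algC -> algC}) S :
  is_subfield S -> is_subfield (fun x => S (f x)).
Proof.
move=> subS; split=> [||x y|x y|x]; rewrite ?rmorph0 ?rmorph1 ?rmorphB ?rmorphM ?fmorphV.
- exact: subfield0.
- exact: subfield1.
- exact: subfieldB.
- exact: subfieldM.
- exact: subfieldV.
Qed.

Lemma gen_field_morph_eq G (f g : {rmorphism algC -> algC}) x :
  (forall y, G y -> f y = g y) -> gen_field G x -> f x = g x.
Proof. by move=> fgG Gx; apply: (Gx _ (morph_eq_subfield f g)). Qed.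

Lemma gen_field_morph G (f : {rmorphism algC -> algC}) x :
  (forall y, G y -> gen_field G (f y)) -> gen_field G x -> gen_field G (f x).
Proof. by move=> fG Gx; apply: (Gx _ (preim_subfield f (gen_field_subfield G))). Qed.

Local Notation pQtoC := (map_poly (ratr : rat -> algC)).

Lemma root_minPoly_num_field (Qs : fieldExtType rat) (QsC : {rmorphism Qs -> algC}) xs ys :
  root (minCpoly (QsC xs)) (QsC ys) -> root (minPoly 1 xs) ys.
Proof.
move=> ry; have /polyOver1P[q Dq] := minPolyOver 1 xs.
have QsC_q : map_poly QsC (minPoly 1 xs) = pQtoC q.
  rewrite Dq -map_poly_comp; apply: eq_map_poly => c.
  by rewrite /= alg_num_field fmorph_rat.
have [p [Dp _] dv_p] := minCpolyP (QsC xs); rewrite Dp in ry.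
have : root (pQtoC q) (QsC xs) by rewrite -QsC_q fmorph_root root_minPoly.
rewrite dv_p => /dvdpP[r Dq'].
by rewrite -(fmorph_root QsC) QsC_q Dq' rmorphM rootM ry orbT.
Qed.

Lemma aut_root_minCpoly x y : root (minCpoly x) y ->
  exists nu : {rmorphism algC -> algC}, nu x = y.
Proof.
move=> ry; have [r Dr] := closed_field_poly_normal (minCpoly x).
rewrite (monicP (minCpoly_monic x)) scale1r in Dr.
have [Qs [QsC [rs Drs genQs]]] := num_field_exists r.
have lift_root z : root (minCpoly x) z -> exists zs, z = QsC zs.
  by rewrite Dr root_prod_XsubC -Drs => /mapP[zs _ ->]; exists zs.
have [xs Dxs] := lift_root x (root_minCpoly x).
have [ys Dys] := lift_root y ry.
have [p [Dp _] _] := minCpolyP x.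
have hom1 : kHom 1 1 (\1%VF : 'End(Qs)) by rewrite kHom1.
have root_ys : root (map_poly \1%VF (minPoly 1 xs)) ys.
  rewrite map_poly_id => [|c _]; last by rewrite id_lfunE.
  by apply: (root_minPoly_num_field (QsC := QsC)); rewrite -Dxs -Dys.
have splitQs : splittingFieldFor <<1; xs>> (map_poly (in_alg Qs) p) fullv.
  exists rs; last by apply/eqP; rewrite eqEsubv subvf -genQs adjoin_seqSl ?sub1v.
  rewrite (_ : map_poly _ p = \prod_(z <- rs) ('X - z%:P)) ?eqpxx //.
  apply: (map_poly_inj QsC); rewrite -map_poly_comp rmorph_prod.
  rewrite (eq_map_poly (g := ratr)) => [|c]; last by rewrite /= alg_num_field fmorph_rat.
  by rewrite -Dp Dr -Drs big_map; apply: eq_bigr => z _; rewrite /= map_polyXsubC.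
have [g homg Dg] := kHom_extends (sub1v _) (kHomExtendP (subvv _) hom1 root_ys)
  (alg_polyOver _ _) splitQs.
pose gRM : {rmorphism Qs -> Qs} := HB.pack (fun_of_lfun g)
  (GRing.isZmodMorphism.Build _ _ g (raddfB g))
  (GRing.isMonoidMorphism.Build _ _ g (kHom_monoid_morphism homg)).
have [nu Dnu] := extend_algC_subfield_aut QsC gRM.
exists nu; rewrite Dxs Dys -Dnu /= -Dg ?memv_adjoin //.
by rewrite (kHomExtend_val hom1 root_ys).
Qed.

Lemma minCpoly_other_root x : x \notin Crat ->
  exists2 y, root (minCpoly x) y & y != x.
Proof.
move=> xQ; have [r Dr] := closed_field_poly_normal (minCpoly x).
rewrite (monicP (minCpoly_monic x)) scale1r in Dr.
have [/hasP[y r_y yx] | /hasPn all_x] := boolP (has (predC1 x) r).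
  by exists y; rewrite // Dr root_prod_XsubC.
have {}Dr : minCpoly x = \prod_(z <- nseq (size r) x) ('X - z%:P).
  by rewrite Dr -(all_pred1P _ _ _) //; apply/allP => z /all_x /negPn.
have r_gt0 : (0 < size r)%N.
  by have := size_minCpoly x; rewrite Dr size_prod_XsubC size_nseq; case: (size r).
have [p [Dp _] _] := minCpolyP x.
set k := size r in Dr r_gt0 *.
have : (minCpoly x)`_k.-1 = - x *+ k.
  rewrite Dr -[k in _`_k.-1](size_nseq k x) coefPn_prod_XsubC ?size_nseq -?lt0n //.
  by rewrite big_nseq iter_addr_0 mulNrn.
rewrite Dp coef_map /= -mulr_natr => /(congr1 (fun c => - c / k%:R)).
rewrite (mulNr x) opprK mulfK ?pnatr_eq0 -?lt0n // => Dx.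
by case/negP: xQ; rewrite -Dx; apply: rpred_div; rewrite ?rpredN ?Crat_rat ?rpred_nat.
Qed.

Lemma aut_moves_irrational x : x \notin Crat ->
  exists nu : {rmorphism algC -> algC}, nu x != x.
Proof.
case/minCpoly_other_root => y ry yx.
by have [nu nux] := aut_root_minCpoly ry; exists nu; rewrite nux.
Qed.

Lemma Crat_aut_fixed x : (forall nu : {rmorphism algC -> algC}, nu x = x) -> x \in Crat.
Proof.
move=> fixx; apply/negPn/negP => /aut_moves_irrational[nu].
by rewrite fixx eqxx.
Qed.

Lemma aut_sqrt s (nu : {rmorphism algC -> algC}) : s ^+ 2 \in Crat -> nu s = s \/ nu s = - s.
Proof.
move=> s2Q; have : nu s ^+ 2 == s ^+ 2 by rewrite -rmorphXn aut_Crat.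
by rewrite eqf_sqr => /orP[] /eqP; [left | right].
Qed.

Lemma aut_sqrt_opp s : s \notin Crat -> s ^+ 2 \in Crat ->
  exists rho : {rmorphism algC -> algC}, rho s = - s.
Proof.
move=> sQ s2Q; have [rho rho_s] := aut_moves_irrational sQ.
by exists rho; case: (aut_sqrt rho s2Q) rho_s => ->; rewrite ?eqxx.
Qed.

Lemma mul_sqrt_Crat s u : s ^+ 2 \in Crat -> u ^+ 2 \in Crat -> u \notin Crat ->
  (forall nu : {rmorphism algC -> algC}, nu s = s -> nu u = u) -> s * u \in Crat.
Proof.
move=> s2Q u2Q uQ fix_u; have [rho rho_u] := aut_sqrt_opp uQ u2Q.
have u0 : u != 0 by apply: contraNneq uQ => ->; apply: rpred0.
have rho_s : rho s = - s.
  case: (aut_sqrt rho s2Q) => // /fix_u; rewrite rho_u => /eqP.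
  by rewrite -subr_eq0 -opprD -mulr2n oppr_eq0 mulrn_eq0 (negbTE u0).
apply: Crat_aut_fixed => nu; rewrite rmorphM.
case: (aut_sqrt nu s2Q) => nu_s; first by rewrite nu_s fix_u.
have nu_u : nu (rho u) = u by apply: (fix_u (nu \o rho)); rewrite /= rho_s rmorphN nu_s opprK.
by rewrite nu_s -[nu u]opprK -rmorphN -rho_u nu_u mulrNN.
Qed.

Definition Qadj (s : algC) : algC -> Prop := gen_field (fun g => g = s).
Definition Qadj2 (s z : algC) : algC -> Prop := gen_field (fun g => Qadj s g \/ g = z).

Lemma Qadj_subfield s : is_subfield (Qadj s). Proof. exact: gen_field_subfield. Qed.
Lemma Qadj2_subfield s z : is_subfield (Qadj2 s z). Proof. exact: gen_field_subfield. Qed.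

Lemma Qadj_gen s : Qadj s s. Proof. exact: gen_field_gen. Qed.

Lemma Qadj_Qadj2 s z x : Qadj s x -> Qadj2 s z x.
Proof. by move=> Kx; apply: gen_field_gen; left. Qed.

Lemma Qadj2_gen s z : Qadj2 s z z. Proof. by apply: gen_field_gen; right. Qed.

Lemma Qadj_aut s (nu : {rmorphism algC -> algC}) x :
  s ^+ 2 \in Crat -> Qadj s x -> Qadj s (nu x).
Proof.
move=> s2Q; apply: gen_field_morph => _ ->.
by case: (aut_sqrt nu s2Q) => ->; [|apply: (subfieldN (Qadj_subfield s))]; apply: Qadj_gen.
Qed.

Lemma Qadj2_aut s z (nu : {rmorphism algC -> algC}) x :
  s ^+ 2 \in Crat -> Qadj2 s z (nu z) -> Qadj2 s z x -> Qadj2 s z (nu x).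
Proof.
move=> s2Q Lz; apply: gen_field_morph => y [Ky | ->] //.
by apply: Qadj_Qadj2; apply: Qadj_aut.
Qed.

(* [c = ((c + rho c) + (c - rho c) / s * s) / 2], where [c + rho c] and
   [(c - rho c) / s] are fixed by every automorphism, hence rational. *)
Lemma Qadj_aut_invariant s c : s \notin Crat -> s ^+ 2 \in Crat ->
  (forall f g : {rmorphism algC -> algC}, f s = g s -> f c = g c) -> Qadj s c.
Proof.
move=> sQ s2Q fg_c; have [rho rho_s] := aut_sqrt_opp sQ s2Q.
have s0 : s != 0 by apply: contraNneq sQ => ->; apply: rpred0.
have aut_c (f : {rmorphism algC -> algC}) : f s = s -> f c = c /\ f (rho c) = rho c.
  move=> f_s; split; first exact: (fg_c f idfun f_s).
  by apply: (fg_c (f \o rho) rho); rewrite /= rho_s rmorphN f_s.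
have aut_c' (f : {rmorphism algC -> algC}) : f s = - s -> f c = rho c /\ f (rho c) = c.
  move=> f_s; split; first by apply: fg_c; rewrite f_s rho_s.
  by apply: (fg_c (f \o rho) idfun); rewrite /= rho_s rmorphN f_s opprK.
have trQ : c + rho c \in Crat.
  apply: Crat_aut_fixed => f; rewrite rmorphD.
  by case: (aut_sqrt f s2Q) => [/aut_c|/aut_c'] [-> ->]; rewrite // addrC.
have dQ : (c - rho c) / s \in Crat.
  apply: Crat_aut_fixed => f; rewrite fmorph_div rmorphB.
  case: (aut_sqrt f s2Q) => f_s; [case: (aut_c f f_s) | case: (aut_c' f f_s)] => -> ->;
  by rewrite f_s ?invrN ?mulrN -?mulNr ?opprB.
have -> : c = ((c + rho c) + (c - rho c) / s * s) / 2 by field; rewrite ?pnatr_eq0.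
have subK := Qadj_subfield s.
apply: (subfield_div subK); last exact: subfield_nat.
apply: (subfieldD subK); first exact: subfield_Crat.
by apply: (subfieldM subK); [apply: subfield_Crat | apply: Qadj_gen].
Qed.

Lemma aut_unity_root_exp n (nu : {rmorphism algC -> algC}) : (0 < n)%N ->
  exists t, forall w, w ^+ n = 1 -> nu w = w ^+ t.+1.
Proof.
move=> n_gt0; have [z prim_z] := C_prim_root_exists n_gt0.
have [i nu_z] : exists i, nu z = z ^+ i.+1.
  have : nu z ^+ n = 1 by rewrite -rmorphXn prim_expr_order // rmorph1.
  case/(prim_rootP prim_z) => i ->; exists (i + n.-1)%N.
  by rewrite -addnS prednK // exprD (prim_expr_order prim_z) mulr1.
exists i => w /(prim_rootP prim_z)[j ->].
by rewrite rmorphXn nu_z -!exprM mulnC.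
Qed.

Lemma unity_root_coprime_eq1 (xi : algC) t d :
  coprime t d -> xi ^+ t = 1 -> xi ^+ d = 1 -> xi = 1.
Proof.
move=> co_td /eqP xi_t /eqP xi_d; apply/eqP; rewrite -[xi]expr1 -dvdn_orderC.
by rewrite -(eqP co_td) dvdn_gcd !dvdn_orderC xi_t xi_d.
Qed.

Lemma aut_fixed_root S (sig : {rmorphism algC -> algC}) t d a b :
  is_subfield S -> (0 < d)%N -> coprime t d ->
  (forall w, w ^+ d = 1 -> sig w = w ^+ t.+1) -> sig a = a ->
  S b -> S (sig b) -> b ^+ d = a -> b != 0 ->
  exists2 c, S c & c ^+ d = a /\ sig c = c.
Proof.
move=> subS d_gt0 co_td sig_d sig_a Sb Ssig_b ba b0.
(* [om] is a d-th root of unity, raised to the power [t.+1] by [sig];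
   with [k * t = -1 (mod d)], [b * om ^+ k] is [sig]-fixed. *)
pose om := sig b / b.
have om_d : om ^+ d = 1 by rewrite expr_div_n -rmorphXn ba sig_a divff // -ba expf_neq0.
have [k _ /dvdnP[l Dl]] := Bezoutl t d_gt0; rewrite coprime_sym in co_td.
have om_kt : om * om ^+ (k * t) = 1.
  by rewrite -exprS -add1n -(eqP co_td) Dl mulnC exprM om_d expr1n.
exists (b * om ^+ k); first by apply/(subfieldM subS)/(subfieldX subS)/(subfield_div subS).
split; first by rewrite exprMn -exprM mulnC exprM om_d expr1n mulr1.
have sig_b : sig b = om * b by rewrite divfK.
rewrite rmorphM rmorphXn (sig_d _ om_d) sig_b -exprM mulSn exprD.
by transitivity (b * om ^+ k * (om * om ^+ (t * k))); [ring | rewrite mulnC om_kt mulr1].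
Qed.

Section KummerDescent.

Variables (s z : algC) (n d t : nat) (sig : {rmorphism algC -> algC}).
Hypotheses (sQ : s \notin Crat) (s2Q : s ^+ 2 \in Crat) (zn : z ^+ n = 1).
Hypotheses (dn : (d %| n)%N) (co_td : coprime t d).
Hypotheses (sig_n : forall w, w ^+ n = 1 -> sig w = w ^+ t.+1) (sig_s : sig s = s).

Lemma unity_root_dvd (w : algC) : w ^+ d = 1 -> w ^+ n = 1.
Proof. by move=> wd; rewrite -(divnK dn) mulnC exprM wd expr1n. Qed.

Lemma aut_commute_Qadj2 (h : {rmorphism algC -> algC}) x :
  Qadj2 s z x -> sig (h x) = h (sig x).
Proof.
apply: (gen_field_morph_eq (f := sig \o h) (g := h \o sig)) => y [Ky | ->] /=.
  apply: (gen_field_morph_eq (f := sig \o h) (g := h \o sig)) Ky => _ -> /=.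
  by rewrite sig_s; case: (aut_sqrt h s2Q) => ->; rewrite ?rmorphN sig_s.
by rewrite !sig_n ?rmorphXn // -rmorphXn zn rmorph1.
Qed.

Lemma Qadj2_fixed_Qadj c :
  Qadj2 s z c -> sig c = c -> Qadj s (c ^+ d) -> c != 0 -> Qadj s c.
Proof.
move=> Lc sig_c Kcd c0; apply: Qadj_aut_invariant => // f g fg_s.
have gc0 : g c != 0 by rewrite fmorph_eq0.
pose xi := f c / g c.
have xi0 : xi != 0 by rewrite mulf_neq0 ?invr_eq0 ?fmorph_eq0.
have xi_d : xi ^+ d = 1.
  rewrite expr_div_n -!rmorphXn (gen_field_morph_eq (f := f) (g := g) _ Kcd) => [|_ ->] //.
  by rewrite divff // fmorph_eq0 expf_neq0.
have xi_t : xi ^+ t = 1.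
  apply: (mulfI xi0); rewrite -exprS -sig_n ?unity_root_dvd // mulr1.
  by rewrite fmorph_div !aut_commute_Qadj2 // sig_c.
have xi1 := unity_root_coprime_eq1 co_td xi_t xi_d.
by rewrite -(divfK gc0 (f c)) -/xi xi1 mul1r.
Qed.

Lemma dth_powers_Qadj2_Qadj a : (0 < d)%N -> Qadj s a -> a != 0 ->
  dth_powers (Qadj2 s z) d a -> dth_powers (Qadj s) d a.
Proof.
move=> d_gt0 Ka a0 [b [Lb ab]].
have b0 : b != 0 by apply: contraNneq a0 => b0; rewrite ab b0 expr0n gtn_eqF.
have sig_a : sig a = a by apply: (gen_field_morph_eq (g := idfun)) Ka => _ ->.
have Lsig_b : Qadj2 s z (sig b).
  apply: Qadj2_aut => //; rewrite sig_n //.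
  by apply: (subfieldX (Qadj2_subfield s z)); apply: Qadj2_gen.
have sig_d w : w ^+ d = 1 -> sig w = w ^+ t.+1 by move/unity_root_dvd/sig_n.
have [c Lc [cd sig_c]] :=
  aut_fixed_root (Qadj2_subfield s z) d_gt0 co_td sig_d sig_a Lb Lsig_b (esym ab) b0.
exists c; split; last by rewrite cd.
apply: Qadj2_fixed_Qadj; rewrite ?cd //.
by apply: contraNneq a0 => c0; rewrite -cd c0 expr0n gtn_eqF.
Qed.

End KummerDescent.

Lemma Aint_sqr_int (x : algC) : x ^+ 2 \in Num.int -> x \in Aint.
Proof.
move=> x2Z; apply: (@root_monic_Aint ('X^2 - (x ^+ 2)%:P)).
- by rewrite rootE !hornerE subrr.
- exact: monicXnsubC.
- by rewrite polyOverXnsubC.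
Qed.

Lemma Crat_sqr_int (x : algC) : x \in Crat -> x ^+ 2 \in Num.int -> x \in Num.int.
Proof. by move=> xQ /Aint_sqr_int; apply: Cint_rat_Aint. Qed.

Lemma sqrt_int_irrational (D : int) s : s ^+ 2 = D%:~R -> ~ is_square_int D -> s \notin Crat.
Proof.
move=> s2 nsq; apply/negP => sQ; apply: nsq.
have /intrP[m Dm] : s \in Num.int by rewrite Crat_sqr_int // s2 intr_int.
by exists m; apply: (@intr_inj algC); rewrite intrM -Dm -expr2.
Qed.

Lemma int_squarefree_m3 : int_squarefree (-3).
Proof. by split=> // p p_pr; apply/negP => /dvdn_leq; have := prime_gt1 p_pr; nia. Qed.

Lemma sqr_eq_m3_mul (D m0 : int) : m0 * m0 = -3 * D -> exists m : int, D = -3 * m ^+ 2.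
Proof.
move=> Dm0; have : (3 %| `|m0| * `|m0|)%N by apply/dvdnP; exists `|D|%N; lia.
by rewrite Euclid_dvdM // orbb => /dvdnP[k Dk]; exists k%:Z; lia.
Qed.

Lemma cube_root_sqr (w : algC) : 3.-primitive_root w -> (2 * w + 1) ^+ 2 = -3.
Proof.
move=> prim_w; have w1 : w != 1 by rewrite -[w]expr1 -(prim_order_dvd prim_w 1).
have : (w - 1) * (w ^+ 2 + w + 1) = 0.
  by rewrite -[RHS](subrr 1) -{3}(prim_expr_order prim_w); ring.
move/eqP; rewrite mulf_eq0 subr_eq0 (negbTE w1) /= => /eqP cyc.
by transitivity (4 * (w ^+ 2 + w + 1) - 3); [ring | rewrite cyc mulr0 sub0r].
Qed.

(* [2 w + 1] is a square root of [-3]; if no such [sig] existed,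
   [s * (2 w + 1)] would be rational, making [-3 D] a square. *)
Lemma aut_fix_sqrt_move_cube_root (D : int) s w : s ^+ 2 = D%:~R ->
  3.-primitive_root w -> (forall m : int, D <> -3 * m ^+ 2) ->
  exists2 sig : {rmorphism algC -> algC}, sig s = s & sig w != w.
Proof.
move=> s2 prim_w D_m3; apply: NNPP => no_sig.
pose u := 2 * w + 1; have u2 : u ^+ 2 = -3 := cube_root_sqr prim_w.
have u2Q : u ^+ 2 \in Crat by rewrite u2 rpredN (rpred_nat _ 3).
have uQ : u \notin Crat.
  by apply/negP => /Creal_Crat; rewrite realEsqr u2 oppr_ge0 (ler_nat _ 3 0).
have fix_u (nu : {rmorphism algC -> algC}) : nu s = s -> nu u = u.
  move=> nu_s; have nu_w : nu w = w.
    by apply/eqP; apply: contraT => nu_w; case: no_sig; exists nu.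
  by rewrite rmorphD rmorphM (rmorph_nat _ 2) rmorph1 nu_w.
have s2Q : s ^+ 2 \in Crat by rewrite s2 rpred_int.
have /intrP[m0 Dm0] : s * u \in Num.int.
  apply: Crat_sqr_int; first exact: mul_sqrt_Crat.
  by rewrite exprMn s2 u2; apply: rpredM; [exact: intr_int | rewrite rpredN (rpred_nat _ 3)].
have [m Dm] : exists m : int, D = -3 * m ^+ 2.
  apply: (@sqr_eq_m3_mul D m0); apply: (@intr_inj algC).
  by rewrite !intrM -Dm0 -expr2 exprMn s2 u2 mulrC rmorphN (rmorph_nat _ 3).
exact: D_m3 Dm.
Qed.

Lemma dth_powers_3'part s z n d a : s \notin Crat -> s ^+ 2 \in Crat -> z ^+ n = 1 ->
  odd n -> (0 < d)%N -> (d %| n)%N -> Qadj s a -> a != 0 ->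
  dth_powers (Qadj2 s z) d a -> dth_powers (Qadj s) (d`_3^')%N a.
Proof.
move=> sQ s2Q zn odd_n d_gt0 dn Ka a0 Lpow.
have {}Lpow := dth_powers_dvd (Qadj2_subfield s z) (dvdn_part (3%N)^' d) Lpow.
have [sq sq_n] : {sq : {rmorphism algC -> algC} | forall w, w ^+ n = 1 -> sq w = w ^+ 2}.
  by apply: Qn_aut_exists; rewrite coprime2n.
apply: (dth_powers_Qadj2_Qadj (z := z) (n := n) (t := 3) (sig := sq \o sq)) => //.
- exact: dvdn_trans (dvdn_part _ d) dn.
- exact: pnat_coprime (pnat_id _) (part_pnat _ _).
- by move=> w wn /=; rewrite (sq_n w wn) rmorphXn (sq_n w wn) -exprM.
- by rewrite /=; case: (aut_sqrt sq s2Q) => sq_s; rewrite sq_s ?rmorphN sq_s ?opprK.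
Qed.

Lemma dth_powers_3part (D : int) s z n d a : s \notin Crat -> s ^+ 2 = D%:~R ->
  ((3 %| n)%N -> forall m : int, D <> -3 * m ^+ 2) -> z ^+ n = 1 ->
  (0 < n)%N -> (0 < d)%N -> (d %| n)%N -> Qadj s a -> a != 0 ->
  dth_powers (Qadj2 s z) d a -> dth_powers (Qadj s) (d`_3)%N a.
Proof.
move=> sQ s2 D_m3 zn n_gt0 d_gt0 dn Ka a0 Lpow.
have {}Lpow := dth_powers_dvd (Qadj2_subfield s z) (dvdn_part 3%N d) Lpow.
have [d3 | nd3] := boolP (3 %| d)%N; last by rewrite part_p'nat ?p'natE //; exists a; rewrite expr1.
have n3 : (3 %| n)%N := dvdn_trans d3 dn.
have [w prim_w] := C_prim_root_exists (isT : (0 < 3)%N).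
have [sig sig_s sig_w] := aut_fix_sqrt_move_cube_root s2 prim_w (D_m3 n3).
have [t sig_n] := aut_unity_root_exp sig n_gt0.
apply: (dth_powers_Qadj2_Qadj (z := z) (n := n) (t := t) (sig := sig)) => //.
- by rewrite s2 rpred_int.
- exact: dvdn_trans (dvdn_part _ d) dn.
- rewrite p_part coprime_sym coprimeXl // prime_coprime //.
  apply: contra sig_w => /dvdnP[k Dt]; rewrite sig_n ?exprS.
    by rewrite Dt mulnC exprM (prim_expr_order prim_w) expr1n mulr1.
  by apply/eqP; rewrite -(prim_order_dvd prim_w).
Qed.

Lemma zeta_expn n : (0 < n)%N -> zeta n ^+ n = 1.
Proof. by move=> n_gt0; rewrite /zeta -exprM mulnC exprM rootCK // expr2 mulrNN mulr1. Qed.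

Theorem lemma5p4 (a1 a2 : int) (n d : nat) (a : algC) :
  a1 != 0 -> a2 != 0 ->
  ~ is_square_int (a1 ^+ 2 + 4 * a2) ->
  (0 < n)%N -> odd n ->
  (forall D0 m : int, int_squarefree D0 -> a1 ^+ 2 + 4 * a2 = D0 * m ^+ 2 ->
     D0 = -3 -> ~~ (3 %| n)%N) ->
  (0 < d)%N -> (d %| n)%N ->
  quad_field (a1 ^+ 2 + 4 * a2) a ->
  (dth_powers (adjoin_zeta (a1 ^+ 2 + 4 * a2) n) d a <->
   dth_powers (quad_field (a1 ^+ 2 + 4 * a2)) d a).
Proof.
move=> _ _; set D := a1 ^+ 2 + 4 * a2 => nsq n_gt0 odd_n D0_m3 d_gt0 dn Ka.
rewrite /adjoin_zeta /quad_field -/(Qadj _) -/(Qadj2 _ _) in Ka *.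
split=> [Lpow | [b [Kb ->]]]; last by exists b; split; first exact: Qadj_Qadj2.
have [-> | a0] := eqVneq a 0.
  by exists 0; split; [apply: subfield0 (Qadj_subfield _) | rewrite expr0n gtn_eqF].
have s2 : sqrtC (D%:~R : algC) ^+ 2 = D%:~R by rewrite sqrtCK.
have sQ := sqrt_int_irrational s2 nsq.
have D_m3 (n3 : (3 %| n)%N) m : D <> -3 * m ^+ 2.
  by move=> Dm; move: (D0_m3 _ _ int_squarefree_m3 Dm erefl); rewrite n3.
rewrite -(partnC 3%N d_gt0); apply: (dth_powers_coprimeM (Qadj_subfield _) _ a0).
- exact: coprime_partC.
- exact: dth_powers_3part sQ s2 D_m3 (zeta_expn n_gt0) n_gt0 d_gt0 dn Ka a0 Lpow.
- apply: dth_powers_3'part sQ _ (zeta_expn n_gt0) odd_n d_gt0 dn Ka a0 Lpow.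
  by rewrite s2 rpred_int.
Qed.
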